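(* Consider the four-stage implicit Runge–Kutta method with Butcher tableau $(\mathbf c,\mathbf A,\mathbf b)$ given by \[ \begin{array}{c|cccc} 0 & 0 & 0 & 0 & 0 \\ \frac 1 3 & \frac{47}{360} & \frac{89}{360} & -\frac{19}{360} & \frac{3}{360} \\ \frac 2 3 & \frac{21}{180} & \frac{77}{180} & \frac{23}{180} & -\frac{1}{180} \\ 1 & \frac 1 8 & \frac 3 8 & \frac 3 8 & \frac 1 8 \\ \hline & \frac 1 8 & \frac 3 8 & \frac 3 8 & \frac 1 8 \end{array} \] This method is stiffly accurate and has explicit first line; it is A-stable; its order of convergence is $p=4$; and its stage order is $\tilde q=3$.
   Context: An $s$-stage Runge–Kutta method with Butcher tableau $\mathbf c=(c_i)$, $\mathbf A=(a_{i,j})$, $\mathbf b=(b_i)$ applied to the initial value problem $y'(x)=f(x,y(x))$, $y(a)=y_a$, with step size $h$ and grid $x_n=a+nh$, computes $y_{n+1}=y_n+h\sum_{i=1}^s b_iK_i$, where $K_i=f\big(x_n+hc_i,\ y_n+h\sum_{j=1}^s a_{i,j}K_j\big)$, $i=1,\dots,s$. The method has order $p$ if its local truncation error is $\mathcal O(h^{p+1})$ (equivalently, all Butcher order conditions up to order $p$ hold). The method has explicit first line if $a_{1,1}=\dots=a_{1,s}=0$, and is stiffly accurate if $a_{s,i}=b_i$ for all $i=1,\dots,s$. Its stability function is $R(z)=\det(\mathbf I-z\mathbf A+z\mathbf e\mathbf b^T)/\det(\mathbf I-z\mathbf A)$ (with $\mathbf I$ the identity matrix and $\mathbf e$ the vector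 of ones), i.e. applying the method to $y'=\lambda y$ gives $y_{n+1}=R(h\lambda)y_n$; the method is A-stable if its stability domain $\{z\in\mathbb C:|R(z)|\le 1\}$ contains the left half-plane $\{z:\mathrm{Re}(z)\le 0\}$. Simplifying conditions: $B(p)$: $\sum_{i=1}^s b_ic_i^{k-1}=1/k$ for $k=1,\dots,p$; $C(q)$: $\sum_{j=1}^s a_{i,j}c_j^{k-1}=c_i^k/k$ for $k=1,\dots,q$, $i=1,\dots,s$. The stage order is the maximal integer $\tilde q$ such that $B(p)$ and $C(q)$ hold for $p=1,\dots,\tilde q$ and $q=1,\dots,\tilde q$. *)

From HB Require Import structures.
From mathcomp Require Import all_boot all_order all_algebra.
Set Implicit Arguments. Unset Strict Implicit. Unset Printing Implicit Defensive.
Import Order.TTheory GRing.Theory Num.Theory.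
Local Open Scope ring_scope.

Section RK.
Variables (F : fieldType) (s : nat).
Variables (c : 'I_s -> F) (A : 'M[F]_s) (b : 'I_s -> F).

Definition explicit_first_line : Prop :=
  forall k j : 'I_s, nat_of_ord k = 0%N -> A k j = 0.

Definition stiffly_accurate : Prop :=
  forall k i : 'I_s, nat_of_ord k = s.-1 -> A k i = b i.

Definition condB (p : nat) : Prop :=
  forall k : nat, (1 <= k <= p)%N -> \sum_(i < s) b i * c i ^+ k.-1 = k%:R^-1.

Definition condC (q : nat) : Prop :=
  forall k : nat, (1 <= k <= q)%N ->
    forall i : 'I_s, \sum_(j < s) A i j * c j ^+ k.-1 = c i ^+ k / k%:R.

Definition has_stage_order (q : nat) : Prop :=
  (forall k, (k <= q)%N -> condB k /\ condC k) /\ ~ (condB q.+1 /\ condC q.+1).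

End RK.

Inductive rtree : Type := Node of seq rtree.

Fixpoint rt_order (t : rtree) : nat :=
  match t with
  | Node ts => (fix sumo l := match l with [::] => 1%N | u :: l' => (rt_order u + sumo l')%N end) ts
  end.

Fixpoint rt_gamma (t : rtree) : nat :=
  match t with
  | Node ts => (rt_order (Node ts) *
      (fix prodg l := match l with [::] => 1%N | u :: l' => (rt_gamma u * prodg l')%N end) ts)%N
  end.

Section OrderConds.
Variables (F : fieldType) (s : nat) (A : 'M[F]_s) (b : 'I_s -> F).

Fixpoint rt_psi (t : rtree) (i : 'I_s) : F :=
  match t with
  | Node ts => (fix prodl l := match l with
                 | [::] => 1
                 | u :: l' => (\sum_(j < s) A i j * rt_psi u j) * prodl l'
                 end) ts
  end.

Definition rt_phi (t : rtree) : F := \sum_(i < s) b i * rt_psi t i.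

Definition order_conditions (p : nat) : Prop :=
  forall t : rtree, (rt_order t <= p)%N -> rt_phi t = (rt_gamma t)%:R^-1.

Definition has_order (p : nat) : Prop :=
  order_conditions p /\ ~ order_conditions p.+1.
End OrderConds.

Section Stability.
Variables (C : numClosedFieldType) (s : nat) (A : 'M[C]_s) (b : 'I_s -> C).

Definition stab_num (z : C) : C :=
  \det (1%:M - z *: A + z *: (const_mx 1 *m \row_i b i) : 'M[C]_s).
Definition stab_den (z : C) : C := \det (1%:M - z *: A : 'M[C]_s).
Definition stab_fun (z : C) : C := stab_num z / stab_den z.

Definition stab_domain (z : C) : Prop := stab_den z != 0 /\ `|stab_fun z| <= 1.

Definition A_stable : Prop := forall z : C, 'Re z <= 0 -> stab_domain z.
End Stability.

Definition rk4_c : 'I_4 -> rat :=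
  fun i => nth 0 [:: 0; 1/3; 2/3; 1] i.
Definition rk4_A : 'M[rat]_4 :=
  \matrix_(i < 4, j < 4) nth 0 (nth [::] [::
     [:: 0; 0; 0; 0];
     [:: 47/360; 89/360; -19/360; 3/360];
     [:: 21/180; 77/180; 23/180; -1/180];
     [:: 1/8; 3/8; 3/8; 1/8]] i) j.
Definition rk4_b : 'I_4 -> rat :=
  fun i => nth 0 [:: 1/8; 3/8; 3/8; 1/8] i.

From mathcomp Require Import all_boot all_order all_algebra.
From mathcomp Require Import ring lra.

Set Implicit Arguments.
Unset Strict Implicit.
Unset Printing Implicit Defensive.
Import Order.TTheory GRing.Theory Num.Theory.
Local Open Scope ring_scope.

(* Order: C(3) forces the internal weight of every tree t with |t| <= 4 to be
   c_i^(|t|-1) |t| / gamma(t), so B(4) gives Phi(t) = 1/gamma(t); the bushy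
   tree with four leaves has Phi = sum_i b_i c_i^4 <> 1/5, hence order exactly 4.
   Stage order: B(4) and C(3) hold, C(4) fails at the second stage.
   A-stability: stiff accuracy makes the last row of I - zA + z e b^T, and the
   explicit first line the first row of I - zA, a unit row; the remaining 3x3
   determinants are P(z) and P(-z) with P(z) = 1 + z/2 + z^2/10 + z^3/120, and
   |P(z)|^2 - |P(-z)|^2 = 2 Re z * Q(z) with Q > 0. *)

Lemma rt_orderE ts : rt_order (Node ts) = (\sum_(u <- ts) rt_order u).+1.
Proof.
elim: ts => [|u ts IH]; first by rewrite big_nil.
by rewrite big_cons /= in IH *; rewrite IH addnS.
Qed.

Lemma rt_gammaE ts :
  rt_gamma (Node ts) = (rt_order (Node ts) * \prod_(u <- ts) rt_gamma u)%N.
Proof.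
congr (_ * _)%N; elim: ts => [|u ts IH]; first by rewrite big_nil.
by rewrite big_cons /= in IH *; rewrite IH.
Qed.

Lemma rt_psiE (F : fieldType) s (A : 'M[F]_s) ts i :
  rt_psi A (Node ts) i = \prod_(u <- ts) \sum_(j < s) A i j * rt_psi A u j.
Proof.
elim: ts => [|u ts IH]; first by rewrite big_nil.
by rewrite big_cons /= in IH *; rewrite IH.
Qed.

Lemma rt_order_gt0 t : (0 < rt_order t)%N.
Proof. by case: t => ts; rewrite rt_orderE. Qed.

Lemma rtree_nested_ind (P : rtree -> Prop) :
  (forall ts, List.Forall P ts -> P (Node ts)) -> forall t, P t.
Proof.
move=> IH; fix rec 1 => -[ts]; apply: IH.
exact: (fix forest us : List.Forall P us :=
          match us with
          | [::] => List.Forall_nil P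
          | u :: us' => List.Forall_cons u (rec u) (forest us')
          end) ts.
Qed.

Definition rt_bushy (n : nat) : rtree := Node (nseq n (Node [::])).

Lemma rt_order_bushy n : rt_order (rt_bushy n) = n.+1.
Proof. by rewrite rt_orderE big_nseq iter_addn mul1n addn0. Qed.

Lemma rt_gamma_bushy n : rt_gamma (rt_bushy n) = n.+1.
Proof.
rewrite /rt_bushy rt_gammaE -/(rt_bushy n) rt_order_bushy.
by rewrite big_nseq iter_muln exp1n !muln1.
Qed.

Section SimplifyingConditions.
Variables (F : numFieldType) (s : nat).
Variables (c : 'I_s -> F) (A : 'M[F]_s) (b : 'I_s -> F).

Lemma condB_le p q : (p <= q)%N -> condB c b q -> condB c b p.
Proof.
by move=> pq hB k /andP[k1 kp]; apply: hB; rewrite k1 (leq_trans kp).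
Qed.

Lemma condC_le p q : (p <= q)%N -> condC c A q -> condC c A p.
Proof.
by move=> pq hC k /andP[k1 kp]; apply: hC; rewrite k1 (leq_trans kp).
Qed.

Lemma has_stage_orderI q :
  condB c b q -> condC c A q -> ~ condC c A q.+1 -> has_stage_order c A b q.
Proof.
move=> hB hC hC'; split; last by case.
by move=> k kq; split; [exact: condB_le hB | exact: condC_le hC].
Qed.

Lemma rt_psi_condC q t i : condC c A q -> (rt_order t <= q.+1)%N ->
  rt_psi A t i = c i ^+ (rt_order t).-1 * (rt_order t)%:R / (rt_gamma t)%:R.
Proof.
move=> hC; elim/rtree_nested_ind: t i => ts IH i; rewrite rt_orderE ltnS => hts.
have children : \prod_(u <- ts) \sum_(j < s) A i j * rt_psi A u j
              = \prod_(u <- ts) (c i ^+ rt_order u / (rt_gamma u)%:R).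
  elim: ts IH hts => [|u ts IHts]; first by rewrite !big_nil.
  move=> /List.Forall_cons_iff[IHu IH]; rewrite !big_cons => hts.
  rewrite IHts ?(leq_trans (leq_addl _ _) hts) //; congr (_ * _).
  have hu : (rt_order u <= q)%N := leq_trans (leq_addr _ _) hts.
  have u0 : (rt_order u)%:R != 0 :> F by rewrite pnatr_eq0 -lt0n rt_order_gt0.
  under eq_bigr => j _ do rewrite IHu ?(leqW hu) // -mulrA mulrA.
  by rewrite -big_distrl /= hC ?rt_order_gt0 // mulrA divfK.
have k0 : (\sum_(u <- ts) rt_order u).+1%:R != 0 :> F by rewrite pnatr_eq0.
rewrite rt_gammaE rt_orderE rt_psiE children big_split /= prodrXr prodfV -natr_prod.
by rewrite natrM invfM mulrA mulfK.
Qed.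

Lemma order_conditions_BC p :
  condB c b p -> condC c A p.-1 -> order_conditions A b p.
Proof.
move=> hB hC t hp; rewrite /rt_phi.
have ht : (rt_order t <= p.-1.+1)%N := leq_trans hp (leqSpred p).
pose w : F := (rt_order t)%:R / (rt_gamma t)%:R.
rewrite (eq_bigr (fun i => b i * c i ^+ (rt_order t).-1 * w)); last first.
  by move=> i _; rewrite (rt_psi_condC i hC ht) !mulrA.
have t0 : (rt_order t)%:R != 0 :> F by rewrite pnatr_eq0 -lt0n rt_order_gt0.
by rewrite -big_distrl /= hB ?rt_order_gt0 // mulKf.
Qed.

Lemma rt_psi_bushy n i : condC c A 1 -> rt_psi A (rt_bushy n) i = c i ^+ n.
Proof.
move=> hC; rewrite rt_psiE big_nseq iter_mulr_1; congr (_ ^+ _).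
have := hC 1%N isT i; rewrite expr1 divr1 => <-.
by apply: eq_bigr => j _; rewrite expr0.
Qed.

Lemma condB_order_conditions p :
  condC c A 1 -> order_conditions A b p -> condB c b p.
Proof.
move=> hC hO k /andP[k1 kp].
have := hO (rt_bushy k.-1); rewrite rt_order_bushy rt_gamma_bushy prednK //.
move=> /(_ kp) <-; apply: eq_bigr => i _.
by rewrite rt_psi_bushy.
Qed.

End SimplifyingConditions.

Lemma det_mx33 (R : comNzRingType) (M : 'M[R]_3) :
  \det M = M 0 0 * (M 1 1 * M 2 2 - M 1 2 * M 2 1)
         - M 0 1 * (M 1 0 * M 2 2 - M 1 2 * M 2 0)
         + M 0 2 * (M 1 0 * M 2 1 - M 1 1 * M 2 0).
Proof.
have -> : M = \matrix_(i < 3, j < 3) M (inord i) (inord j).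
  by apply/matrixP => i j; rewrite mxE !inord_val.
rewrite (expand_det_row _ ord0) !big_ord_recl big_ord0 /cofactor.
rewrite !(expand_det_row _ ord0) !big_ord_recl !big_ord0 /cofactor !det_mx11 !mxE /=.
have -> : inord 0 = 0 :> 'I_3 by apply: val_inj; rewrite /= inordK.
have -> : inord 1 = 1 :> 'I_3 by apply: val_inj; rewrite /= inordK.
have -> : inord 2 = 2 :> 'I_3 by apply: val_inj; rewrite /= inordK.
ring.
Qed.

Lemma det_unit_row (R : comNzRingType) n (M : 'M[R]_n) i0 :
  (forall j, M i0 j = (i0 == j)%:R) -> \det M = \det (row' i0 (col' i0 M)).
Proof.
move=> hM; rewrite (expand_det_row _ i0) (bigD1 i0) //= big1 => [|j ji0].
  by rewrite addr0 hM eqxx mul1r /cofactor addnn -signr_odd odd_double mul1r.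
by rewrite hM eq_sym (negPf ji0) mul0r.
Qed.

Lemma stiffly_accurate_map (F K : fieldType) (f : {rmorphism F -> K}) s
    (A : 'M[F]_s) (b : 'I_s -> F) :
  stiffly_accurate A b -> stiffly_accurate (map_mx f A) (fun i => f (b i)).
Proof. by move=> hS k i hk; rewrite mxE hS. Qed.

Lemma explicit_first_line_map (F K : fieldType) (f : {rmorphism F -> K}) s
    (A : 'M[F]_s) :
  explicit_first_line A -> explicit_first_line (map_mx f A).
Proof. by move=> hE k j hk; rewrite mxE hE ?rmorph0. Qed.

Section StabilityReduction.
Variables (C : numClosedFieldType) (n : nat).
Variables (A : 'M[C]_n.+1) (b : 'I_n.+1 -> C).

Lemma stab_num_stiffly_accurate z : stiffly_accurate A b ->
  stab_num A b z
  = \det (row' ord_max (col' ord_max (1%:M - z *: A + z *: (const_mx 1 *m \row_i b i)))).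
Proof.
move=> hS; apply: det_unit_row => j.
by rewrite !mxE big_ord1 !mxE mul1r hS // subrK.
Qed.

Lemma stab_den_explicit_first_line z : explicit_first_line A ->
  stab_den A z = \det (row' ord0 (col' ord0 (1%:M - z *: A))).
Proof. by move=> hE; apply: det_unit_row => j; rewrite !mxE hE // mulr0 subr0. Qed.

End StabilityReduction.

(* The numerator of the (3,3) Pade approximant of exp. *)
Definition pade33 {F : fieldType} (z : F) : F :=
  1 + z / 2%:R + z ^+ 2 / 10%:R + z ^+ 3 / 120%:R.

Section Pade33.
Variable C : numClosedFieldType.
Implicit Types z : C.

Lemma pade33_conj z : (pade33 z)^* = pade33 z^*.
Proof.
by rewrite /pade33 !(rmorphD, rmorphM, rmorphXn, fmorphV, rmorph_nat, rmorph1).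
Qed.

Lemma pade33_norm_le z : 'Re z <= 0 -> `|pade33 z| <= `|pade33 (- z)|.
Proof.
move=> hz; set w := z^*; set r := z + w.
have r_le0 : r <= 0.
  have -> : r = 'Re z * 2%:R by rewrite ReE mulfVK ?pnatr_eq0.
  by rewrite mulr_le0_ge0 ?ler0n.
have zw_ge0 : 0 <= z * w by exact: mul_conjC_ge0.
have r2_ge0 : 0 <= r ^+ 2 by rewrite real_exprn_even_ge0 ?ler0_real.
pose Q := 1 + ((3%:R * (z * w) + r ^+ 2) / 60%:R + (z * w) ^+ 2 / 600%:R).
have Q_gt0 : 0 < Q.
  rewrite ltr_wpDr ?ltr01 // addr_ge0 // divr_ge0 ?ler0n ?exprn_ge0 //.
  by rewrite addr_ge0 // mulr_ge0 ?ler0n.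
have key : pade33 z * pade33 w - pade33 (- z) * pade33 (- w) = r * Q.
  by rewrite /pade33 /Q /r; field.
rewrite -ler_sqr ?qualifE /= ?normr_ge0 // !normCK !pade33_conj rmorphN -/w.
by rewrite -subr_le0 key mulr_le0_ge0 // ltW.
Qed.

Lemma pade33_Nneq0 z : 'Re z <= 0 -> pade33 (- z) != 0.
Proof.
move=> hz; apply/negP => /eqP hN.
have hP : pade33 z = 0.
  have := pade33_norm_le hz; rewrite hN normr0 => hle.
  by apply/normr0_eq0/eqP; rewrite eq_le hle normr_ge0.
have z2 : z ^+ 2 = - 10%:R.
  apply/eqP; rewrite -subr_eq0 -oppr_eq0; apply/eqP.
  have -> : - (z ^+ 2 - - 10%:R) = - 5%:R * (pade33 z + pade33 (- z)).
    by rewrite /pade33; field.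
  by rewrite hP hN addr0 mulr0.
have z0 : z = 0.
  have : z * 5%:R / 6%:R = pade33 z - pade33 (- z) - z * (z ^+ 2 + 10%:R) / 60%:R.
    by rewrite /pade33; field.
  rewrite hP hN z2 addNr mulr0 mul0r !subr0 => /eqP.
  by rewrite !mulf_eq0 invr_eq0 !pnatr_eq0 /= !orbF => /eqP.
by move: z2; rewrite z0 expr0n /= => /eqP; rewrite eq_sym oppr_eq0 pnatr_eq0.
Qed.

Lemma A_stable_pade33 s (A : 'M[C]_s) (b : 'I_s -> C) :
  (forall z, stab_num A b z = pade33 z) -> (forall z, stab_den A z = pade33 (- z)) ->
  A_stable A b.
Proof.
move=> hN hD z hz; have D0 := pade33_Nneq0 hz.
rewrite /stab_domain /stab_fun hN hD; split=> //.
by rewrite normf_div ler_pdivrMr ?normr_gt0 // mul1r pade33_norm_le.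
Qed.

End Pade33.

Lemma rk4_stiffly_accurate : stiffly_accurate rk4_A rk4_b.
Proof.
move=> k i; rewrite mxE; case: k => [k hk] /= ->.
by case: i => [[|[|[|[|i]]]] hi].
Qed.

Lemma rk4_explicit_first_line : explicit_first_line rk4_A.
Proof.
move=> k j; rewrite mxE; case: k => [k hk] /= ->.
by case: j => [[|[|[|[|j]]]] hj].
Qed.

Lemma rk4_condB4 : condB rk4_c rk4_b 4.
Proof.
move=> [|[|[|[|[|k]]]]] //= _.
all: by rewrite !big_ord_recl big_ord0 /rk4_c /rk4_b /=; field.
Qed.

Lemma rk4_condC3 : condC rk4_c rk4_A 3.
Proof.
move=> [|[|[|[|k]]]] //= _ [[|[|[|[|i]]]] hi] //.
all: by rewrite !big_ord_recl big_ord0 !mxE /rk4_c /=; field.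
Qed.

Lemma rk4_not_condC4 : ~ condC rk4_c rk4_A 4.
Proof.
move=> /(_ 4%N isT (@Ordinal 4 1 isT)).
by rewrite !big_ord_recl big_ord0 !mxE /rk4_c /=; lra.
Qed.

Lemma rk4_not_condB5 : ~ condB rk4_c rk4_b 5.
Proof.
move=> /(_ 5%N isT).
by rewrite !big_ord_recl big_ord0 /rk4_c /rk4_b /=; lra.
Qed.

Section Rk4Stability.
Variable C : numClosedFieldType.

Lemma rk4_stab_num z :
  stab_num (map_mx (ratr : rat -> C) rk4_A) (fun i => ratr (rk4_b i)) z = pade33 z.
Proof.
rewrite stab_num_stiffly_accurate; last first.
  exact: stiffly_accurate_map rk4_stiffly_accurate.
by rewrite det_mx33 !mxE !big_ord1 !mxE /rk4_b /= /pade33; field.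
Qed.

Lemma rk4_stab_den z : stab_den (map_mx (ratr : rat -> C) rk4_A) z = pade33 (- z).
Proof.
rewrite stab_den_explicit_first_line; last first.
  exact: explicit_first_line_map rk4_explicit_first_line.
by rewrite det_mx33 !mxE /= /pade33; field.
Qed.

End Rk4Stability.

Theorem theorem3p1 :
  stiffly_accurate rk4_A rk4_b /\
  explicit_first_line rk4_A /\
  (forall C : numClosedFieldType,
     A_stable (map_mx (ratr : rat -> C) rk4_A) (fun i => ratr (rk4_b i))) /\
  has_order rk4_A rk4_b 4 /\
  has_stage_order rk4_c rk4_A rk4_b 3.
Proof.
split; first exact: rk4_stiffly_accurate.
split; first exact: rk4_explicit_first_line.
split; first by move=> C; exact: A_stable_pade33 (@rk4_stab_num C) (@rk4_stab_den C).
split; last first.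
  exact: has_stage_orderI (condB_le (leqnSn 3) rk4_condB4) rk4_condC3 rk4_not_condC4.
split; first exact: order_conditions_BC rk4_condB4 rk4_condC3.
have rk4_condC1 := condC_le (isT : (1 <= 3)%N) rk4_condC3.
by move=> /(condB_order_conditions rk4_condC1); apply: rk4_not_condB5.
Qed.
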